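(* Let $(A,\circ,\cap)$ be a right normal band with intersection. For all $a,b\in A$, $a=a\circ b$ if and only if $a=a\cap b$.
   Context: A right normal band with intersection $(A,\circ,\cap)$: $(A,\circ)$ a semigroup with $x\circ x=x$ and $(x\circ y)\circ z=(y\circ x)\circ z$; $(A,\cap)$ a semilattice (associative, commutative, idempotent); $(x\cap y)\circ x=x\cap y$ and $x\circ(y\cap z)=(x\circ y)\cap z$ for all $x,y,z$. (The relation $a=a\circ b$ is the natural order $a\le b$.) *)

Definition right_normal_band_with_intersection (A : Type)
  (o : A -> A -> A) (cap : A -> A -> A) : Prop :=
  (forall x y z, o (o x y) z = o x (o y z)) /\
  (forall x, o x x = x) /\
  (forall x y z, o (o x y) z = o (o y x) z) /\
  (forall x y z, cap (cap x y) z = cap x (cap y z)) /\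
  (forall x y, cap x y = cap y x) /\
  (forall x, cap x x = x) /\
  (forall x y, o (cap x y) x = cap x y) /\
  (forall x y z, o x (cap y z) = cap (o x y) z).


Section NaturalOrder.

Variables (A : Type) (o cap : A -> A -> A).

Lemma cap_o_r_id
    (cap_idem : forall x, cap x x = x)
    (o_capA : forall x y z, o x (cap y z) = cap (o x y) z)
    (a b : A) :
  cap (o a b) b = o a b.
Proof. now rewrite <- o_capA, cap_idem. Qed.

Lemma o_cap_l_id
    (capC : forall x y, cap x y = cap y x)
    (o_cap_absorb : forall x y, o (cap x y) x = cap x y)
    (a b : A) :
  o (cap a b) b = cap a b.
Proof. now rewrite (capC a b), o_cap_absorb. Qed.

End NaturalOrder.

Theorem proposition3p8 (A : Type) (o : A -> A -> A) (cap : A -> A -> A) :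
  right_normal_band_with_intersection A o cap ->
  forall a b : A, a = o a b <-> a = cap a b.
Proof.
  intros (_ & _ & _ & _ & capC & cap_idem & o_cap_absorb & o_capA) a b.
  (* [rewrite Hab] substitutes for every [a] at once, e.g. turning [a = cap a b]
     into [o a b = cap (o a b) b]. *)
  split; intro Hab.
  - rewrite Hab. now rewrite cap_o_r_id.
  - rewrite Hab. now rewrite o_cap_l_id.
Qed.
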